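(* For $n\ge1$ let $\mathbb{T}_n$ be $\mathbb{C}^n$ with basis $e_1,\dots,e_n$ and product $(a\cdot b)^i=\sum_{k=1}^i a^k b^{i-k+1}$, i.e. $e_i\cdot e_j=e_{i+j-1}$ if $i+j-1\le n$ and $e_i\cdot e_j=0$ otherwise. Then for every $n$, $\mathbb{T}_n$ is an associative Novikov algebra. Moreover: (i) a symmetric bilinear form $g=(g_{ij})$ on $\mathbb{T}_n$ satisfies $g(a\cdot b,c)=g(a,c\cdot b)$ for all $a,b,c$ if and only if $g_{ij}=g_{1,i+j-1}$ when $1\le i+j-1\le n$ and $g_{ij}=0$ otherwise; such a form is nondegenerate if $g_{1n}\neq0$; (ii) there is no nonzero skew-symmetric bilinear form $f$ on $\mathbb{T}_n$ satisfying both $f(a\cdot b,c)=f(a,c\cdot b)$ and $f(a\cdot b,c)+f(b\cdot c,a)+f(c\cdot a,b)=0$ for all $a,b,c\in\mathbb{T}_n$.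
   Context: A Novikov algebra is a complex vector space with a bilinear product $\cdot$ satisfying $(a\cdot b)\cdot c=(a\cdot c)\cdot b$ and $(a\cdot b)\cdot c-a\cdot(b\cdot c)=(b\cdot a)\cdot c-b\cdot(a\cdot c)$ for all $a,b,c$. For a bilinear form $g$, $g_{ij}=g(e_i,e_j)$. *)

From HB Require Import structures.
From mathcomp Require Import all_boot all_order all_algebra.
From mathcomp Require Import complex.
From mathcomp Require Import Rstruct.
From Stdlib Require Import Rdefinitions.
Set Implicit Arguments. Unset Strict Implicit. Unset Printing Implicit Defensive.
Import Order.TTheory GRing.Theory Num.Theory.
Local Open Scope ring_scope.

Notation CC := (Rdefinitions.R)[i].

(* Vectors of T_n = C^n are row vectors 'rV[CC]_n; basis vector e_{i+1} is
   delta at index i : 'I_n (0-based indexing). *)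
Notation vecT n := 'rV[CC]_n.

Definition tmul (n : nat) (a b : vecT n) : vecT n :=
  \row_(i < n) \sum_(k < n) \sum_(l < n | (nat_of_ord k + nat_of_ord l)%N == nat_of_ord i) a 0 k * b 0 l.

Definition bform (n : nat) (g : 'M[CC]_n) (a b : vecT n) : CC :=
  \sum_(i < n) \sum_(j < n) a 0 i * g i j * b 0 j.

Definition t_nondegenerate (n : nat) (g : 'M[CC]_n) : Prop :=
  forall a : vecT n, (forall b : vecT n, bform g a b = 0) -> a = 0.

Definition is_novikov (n : nat) (mul : vecT n -> vecT n -> vecT n) : Prop :=
  forall a b c : vecT n,
    mul (mul a b) c = mul (mul a c) b /\
    mul (mul a b) c - mul a (mul b c) = mul (mul b a) c - mul b (mul a c).

Definition is_associative (n : nat) (mul : vecT n -> vecT n -> vecT n) : Prop :=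
  forall a b c : vecT n, mul (mul a b) c = mul a (mul b c).

Definition t_invariant (n : nat) (g : 'M[CC]_n) : Prop :=
  forall a b c : vecT n, bform g (tmul a b) c = bform g a (tmul c b).

(** T_n is the truncated polynomial algebra C[X]/(X^n) (coordinates = the
    first n coefficients), hence commutative, associative and unital, which
    gives the Novikov identities at once.  In a unital commutative associative
    algebra a form is invariant iff it is a trace form g(a,b) = g(1, a.b); on
    the basis this says that g_ij depends only on i + j and vanishes beyond
    the truncation, i.e. g is an upper-left anti-triangular Hankel matrix,
    which is nondegenerate when its antidiagonal entry g_{1n} is nonzero.
    Trace forms are symmetric, so an invariant skew-symmetric form is zero. *)
From mathcomp Require Import all_boot all_order all_algebra complex Rstruct.
From mathcomp Require Import zify.
Set Implicit Arguments. Unset Strict Implicit. Unset Printing Implicit Defensive.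
Import GRing.Theory Num.Theory.
Local Open Scope ring_scope.

Definition hankel (n : nat) (g : 'M[CC]_n) : Prop :=
  (forall i j i0 k : 'I_n, val i0 = 0%N -> val k = (i + j)%N -> g i j = g i0 k) /\
  (forall i j : 'I_n, (n <= i + j)%N -> g i j = 0).

Definition trace_form (n : nat) (g : 'M[CC]_n) : Prop :=
  forall a b : vecT n, bform g a b = bform g (poly_rV 1) (tmul a b).

Lemma novikov_of_comm_assoc (n : nat) (mul : vecT n -> vecT n -> vecT n) :
  commutative mul -> associative mul -> is_novikov mul.
Proof.
move=> mulC mulA a b c; split; first by rewrite -mulA [mul b c]mulC mulA.
by rewrite -!mulA !subrr.
Qed.

Lemma sum_antidiagonal (R : nmodType) (n i : nat) (F : nat -> nat -> R) :
  (i < n)%N ->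
  \sum_(k < n) \sum_(l < n | (k + l == i)%N) F k l = \sum_(k < i.+1) F k (i - k)%N.
Proof.
move=> lt_in.
have inner (k : 'I_n) : \sum_(l < n | (k + l == i)%N) F k l =
    if (k <= i)%N then F k (i - k)%N else 0.
  case: leqP => hk.
    have lt_ikn : (i - k < n)%N by lia.
    rewrite (big_pred1 (Ordinal lt_ikn)) // => l /=.
    by apply/eqP/eqP => [h | ->]; [apply: val_inj => /=; lia | rewrite /=; lia].
  by rewrite big_pred0 // => l; apply/eqP; lia.
rewrite (eq_bigr _ (fun k _ => inner k)) -big_mkcond /=.
by rewrite (big_ord_widen _ (fun k => F k (i - k)%N) lt_in).
Qed.

Lemma rVpoly_poly_rV (R : nzRingType) (d : nat) (p : {poly R}) :
  rVpoly (poly_rV p : 'rV_d) = take_poly d p.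
Proof.
apply/polyP => k; rewrite coef_rVpoly coef_take_poly.
by case: insubP => [i _ <- | /negbTE ->]; rewrite ?mxE ?ltn_ord.
Qed.

Lemma poly_rV_take_polyMl (R : comNzRingType) (d : nat) (p q : {poly R}) :
  poly_rV (take_poly d p * q) = poly_rV (p * q) :> 'rV_d.
Proof.
apply/rowP => i; rewrite !mxE -[in RHS](poly_take_drop d p) mulrDl coefD.
by rewrite mulrAC coefMXn ltn_ord addr0.
Qed.

Section TruncatedAlgebra.
Variable n : nat.
Implicit Types (a b c : vecT n) (g : 'M[CC]_n).

Lemma tmul_poly a b : tmul a b = poly_rV (rVpoly a * rVpoly b).
Proof.
apply/rowP => i; rewrite !mxE coefM.
under eq_bigr => k _ do under eq_bigr => l _ do rewrite -!coef_rVpoly_ord.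
exact: (@sum_antidiagonal CC n i (fun k l => (rVpoly a)`_k * (rVpoly b)`_l) (ltn_ord i)).
Qed.

Lemma tmulC : commutative (@tmul n).
Proof. by move=> a b; rewrite !tmul_poly mulrC. Qed.

Lemma tmulA : associative (@tmul n).
Proof.
move=> a b c; rewrite !tmul_poly !rVpoly_poly_rV poly_rV_take_polyMl.
by rewrite [_ * take_poly _ _]mulrC poly_rV_take_polyMl [_ * rVpoly a]mulrC mulrA.
Qed.

Lemma tmul1l a : tmul (poly_rV 1) a = a.
Proof. by rewrite tmul_poly rVpoly_poly_rV poly_rV_take_polyMl mul1r rVpolyK. Qed.

Lemma poly_rV1 (i0 : 'I_n) : val i0 = 0%N -> poly_rV 1 = delta_mx 0 i0 :> vecT n.
Proof.
move=> hi0; apply/rowP => j; rewrite !mxE coefC eqxx /=.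
have -> : (j == i0) = (val j == 0%N) by rewrite -hi0.
by case: (val j == 0%N).
Qed.

Lemma tmul_delta (i j k : 'I_n) :
  tmul (delta_mx 0 i) (delta_mx 0 j) 0 k = ((i + j)%N == k)%:R.
Proof. by rewrite tmul_poly !rVpoly_delta -exprD mxE coefXn eq_sym. Qed.

Lemma tmul_entry a b (i : 'I_n) :
  tmul a b 0 i = \sum_(k < n) \sum_(l < n) a 0 k * b 0 l * ((k + l)%N == i)%:R.
Proof.
rewrite mxE; apply: eq_bigr => k _; rewrite big_mkcond; apply: eq_bigr => l _.
by rewrite mulr_natr mulrb.
Qed.

Lemma bform_deltal g (i : 'I_n) b :
  bform g (delta_mx 0 i) b = \sum_(j < n) g i j * b 0 j.
Proof.
rewrite /bform (bigD1 i) //= [X in _ + X]big1 ?addr0 => [|k hk].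
  by apply: eq_bigr => j _; rewrite mxE !eqxx mul1r.
by apply: big1 => j _; rewrite mxE (negbTE hk) !mul0r.
Qed.

Lemma bform_deltar g a (j : 'I_n) :
  bform g a (delta_mx 0 j) = \sum_(i < n) a 0 i * g i j.
Proof.
apply: eq_bigr => i _; rewrite (bigD1 j) //= [X in _ + X]big1 ?addr0 => [|k hk].
  by rewrite mxE !eqxx mulr1.
by rewrite mxE (negbTE hk) mulr0.
Qed.

Lemma bform_delta g (i j : 'I_n) : bform g (delta_mx 0 i) (delta_mx 0 j) = g i j.
Proof.
rewrite bform_deltal (bigD1 j) //= [X in _ + X]big1 ?addr0 => [|k hk].
  by rewrite mxE !eqxx mulr1.
by rewrite mxE (negbTE hk) mulr0.
Qed.

Lemma sum_natr_eq (F : 'I_n -> CC) (k0 : 'I_n) :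
  \sum_(k < n) F k * (val k0 == k)%:R = F k0.
Proof.
rewrite (bigD1 k0) //= eqxx mulr1 big1 ?addr0 // => k hk.
by rewrite -[val k0 == k]/(k0 == k) eq_sym (negbTE hk) mulr0.
Qed.

Lemma sum_natr_ge (F : 'I_n -> CC) (m : nat) :
  (n <= m)%N -> \sum_(k < n) F k * (m == k)%:R = 0.
Proof.
move=> hm; apply: big1 => k _.
have /negbTE-> : m != k by have := ltn_ord k; lia.
by rewrite mulr0.
Qed.

Lemma t_invariant_traceP g : t_invariant g <-> trace_form g.
Proof.
split=> [Hinv a b | Htr a b c].
  by rewrite -{1}[a]tmul1l Hinv tmulC.
by rewrite Htr [in RHS]Htr -tmulA [tmul c b]tmulC.
Qed.

Lemma t_invariant_tr g : t_invariant g -> g^T = g.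
Proof.
move=> /t_invariant_traceP Htr; apply/matrixP => i j; rewrite mxE -!bform_delta.
by rewrite Htr [RHS]Htr tmulC.
Qed.

Lemma t_invariant_skew_eq0 g : t_invariant g -> g^T = - g -> g = 0.
Proof.
move=> /t_invariant_tr -> /eqP; rewrite -subr_eq0 opprK -mulr2n -scaler_nat.
by rewrite scaler_eq0 pnatr_eq0 => /eqP.
Qed.

Section Unit.
Variables (i0 : 'I_n) (hi0 : val i0 = 0%N).

Lemma trace_form_hankel g : trace_form g -> hankel g.
Proof.
rewrite /trace_form (poly_rV1 hi0) => Htr.
have entry (i j : 'I_n) : g i j = \sum_(k < n) g i0 k * ((i + j)%N == k)%:R.
  by rewrite -bform_delta Htr bform_deltal; apply: eq_bigr => k _; rewrite tmul_delta.
split=> [i j i1 k hi1 hk | i j hij]; last by rewrite entry sum_natr_ge.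
by rewrite entry -hk sum_natr_eq; congr (g _ k); apply: val_inj; rewrite /= hi0 hi1.
Qed.

Lemma hankel_sum g (k l : 'I_n) :
  hankel g -> \sum_(j < n) g i0 j * ((k + l)%N == j)%:R = g k l.
Proof.
case=> Hdiag Hzero; case: (ltnP (k + l) n) => hkl; last by rewrite sum_natr_ge ?Hzero.
by rewrite (sum_natr_eq _ (Ordinal hkl)) (Hdiag k l i0 (Ordinal hkl)).
Qed.

Lemma hankel_trace_form g : hankel g -> trace_form g.
Proof.
move=> Hg a b; rewrite (poly_rV1 hi0) bform_deltal.
under [RHS]eq_bigr => j _ do
  (rewrite tmul_entry big_distrr; under eq_bigr => k _ do rewrite big_distrr).
rewrite exchange_big; apply: eq_bigr => k _ /=.
rewrite exchange_big; apply: eq_bigr => l _ /=.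
rewrite -(hankel_sum k l Hg) big_distrr big_distrl; apply: eq_bigr => j _ /=.
by rewrite mulrAC mulrCA.
Qed.

End Unit.

Lemma t_invariant_hankel g : (0 < n)%N -> t_invariant g <-> hankel g.
Proof.
move=> hn; rewrite t_invariant_traceP; split.
  exact: (trace_form_hankel (i0 := Ordinal hn)).
exact: (hankel_trace_form (i0 := Ordinal hn)).
Qed.

Lemma antitriangular_nondegenerate g :
  (forall i j : 'I_n, (n <= i + j)%N -> g i j = 0) ->
  (forall i j : 'I_n, (i + j)%N = n.-1 -> g i j != 0) ->
  t_nondegenerate g.
Proof.
move=> Hzero Hanti a Ha.
suff a_eq0 p (i : 'I_n) : val i = p -> a 0 i = 0.
  by apply/rowP => i; rewrite mxE (a_eq0 _ i erefl).
elim/ltn_ind: p i => p IH i hip.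
have lt_q : (n.-1 - i < n)%N by have := ltn_ord i; lia.
have := Ha (delta_mx 0 (Ordinal lt_q)); rewrite bform_deltar (bigD1 i) //=.
have g_iq_neq0 : g i (Ordinal lt_q) != 0 by apply: Hanti => /=; have := ltn_ord i; lia.
rewrite big1 ?addr0 => [/eqP|j hji]; first by rewrite mulf_eq0 (negbTE g_iq_neq0) orbF => /eqP.
case: (ltnP j i) => hj; first by rewrite (IH j) ?mul0r // -hip.
have lt_ij : (i < j)%N by rewrite ltn_neqAle hj andbT eq_sym.
by rewrite Hzero ?mulr0 //=; have := ltn_ord i; lia.
Qed.

End TruncatedAlgebra.

Theorem proposition5p1 (n : nat) (hn : (0 < n)%N) :
  is_associative (@tmul n) /\ is_novikov (@tmul n) /\
  (forall g : 'M[CC]_n, g^T = g ->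
     (t_invariant g <->
      ((forall (i j i0 k : 'I_n), val i0 = 0%N -> val k = (val i + val j)%N ->
          g i j = g i0 k) /\
       (forall (i j : 'I_n), (n <= val i + val j)%N -> g i j = 0)))) /\
  (forall g : 'M[CC]_n, g^T = g -> t_invariant g ->
     (exists i0 k : 'I_n, [/\ val i0 = 0%N, val k = n.-1 & g i0 k != 0]) ->
     t_nondegenerate g) /\
  (forall f : 'M[CC]_n, f^T = - f -> t_invariant f ->
     (forall a b c : vecT n,
        bform f (tmul a b) c + bform f (tmul b c) a + bform f (tmul c a) b = 0) ->
     f = 0).
Proof.
split; first by move=> a b c; rewrite tmulA.
split; first exact: novikov_of_comm_assoc (@tmulC n) (@tmulA n).
split; first by move=> g _; exact: t_invariant_hankel.
split; last by move=> f hskew Hinv _; apply: t_invariant_skew_eq0.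
move=> g _ /(t_invariant_hankel g hn) [Hdiag Hzero] [i0 [k [hi0 hk hg]]].
apply: antitriangular_nondegenerate => // i j hij.
by rewrite (Hdiag i j i0 k) //= hk hij.
Qed.
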